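(* Let $X\sim N(\mu,\sigma^2)$ and $Y\sim N(\theta,\sigma^2)$ be independent, $\sigma>0$, and $\tau\ge1$. Set $\eta=E_{(0,0)}\big[(X^2-\sigma^2)(Y^2-\sigma^2)\mathbb 1(X^2\vee Y^2>\sigma^2\tau)\big]$, the expectation taken under $\mu=\theta=0$. Then $\eta=-4\sigma^4\tau\,\phi^2(\tau^{1/2})$, and $$\Big|E\big[(X^2-\sigma^2)(Y^2-\sigma^2)\mathbb 1(X^2\vee Y^2>\sigma^2\tau)\big]-\eta-\mu^2\theta^2\Big|\le\min\{\mu^2,3\sigma^2\tau\}\min\{\theta^2,3\sigma^2\tau\}+2\sigma^2\tau^{1/2}\phi(\tau^{1/2})\min\{\mu^2,3\sigma^2\tau\}+2\sigma^2\tau^{1/2}\phi(\tau^{1/2})\min\{\theta^2,3\sigma^2\tau\}.$$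
   Context: $\phi$ denotes the standard normal density; $X^2\vee Y^2=\max\{X^2,Y^2\}$. *)

From Stdlib Require Import Reals Lra.
Open Scope R_scope.

Definition phi (x : R) : R := exp (- (x ^ 2) / 2) / sqrt (2 * PI).

Definition npdf (m s x : R) : R := phi ((x - m) / s) / s.

Definition is_RInt (f : R -> R) (a b v : R) : Prop :=
  exists pr : Riemann_integrable f a b, RiemannInt pr = v.

Definition improper_int (f : R -> R) (l : R) : Prop :=
  forall eps, 0 < eps -> exists M, forall a b, a <= - M -> M <= b ->
    exists v, is_RInt f a b v /\ Rabs (v - l) < eps.

(* E[g(X,Y)] = l for X ~ N(mu, s^2), Y ~ N(th, s^2) independent,
   computed as the iterated integral  int ( int g(x,y) p_mu(x) dx ) p_th(y) dy *)
Definition expect2 (g : R -> R -> R) (mu th s l : R) : Prop :=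
  exists h : R -> R,
    (forall y, improper_int (fun x => g x y * npdf mu s x) (h y)) /\
    improper_int (fun y => h y * npdf th s y) l.

Definition ind_max (c x y : R) : R :=
  if Rlt_dec c (Rmax (x ^ 2) (y ^ 2)) then 1 else 0.

Definition gfun (s tau x y : R) : R :=
  (x ^ 2 - s ^ 2) * (y ^ 2 - s ^ 2) * ind_max (s ^ 2 * tau) x y.

(* For fixed [y], [1(x^2 \/ y^2 > c) = 1 - 1(x^2 <= c) 1(y^2 <= c)], so the inner integral is
   [(y^2 - s^2) (mu^2 - 1(y^2 <= c) A mu)] with [A m = E_m[(X^2 - s^2) 1(X^2 <= c)]], and the
   expectation equals [mu^2 th^2 - A mu * A th].  An explicit antiderivative of [(x^2 - s^2)] times
   the normal density gives [A 0 = -2 s^2 sqrt tau phi (sqrt tau)], whence [eta = - (A 0)^2] and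
   [l - eta - mu^2 th^2 = (A 0)^2 - A mu * A th].  It remains to bound [|A m - A 0|] by [m^2]:
   after standardization, [m |-> m^2 - A m] and [m |-> m^2 + A m] have derivatives with the sign of
   [m] (for the latter when [|m| <= 1], by the convexity of [sinh]), so both are minimal at [0].
   The total mass [1] of [phi] comes from the identity
   [(int_0^x exp (-t^2))^2 + int_0^1 exp (-x^2 (1 + t^2)) / (1 + t^2) dt = PI/4]. *)

From Pilot Require Import Defs.
From Stdlib Require Import Reals Lra Psatz FunctionalExtensionality.
From Coquelicot Require Import Coquelicot.
Open Scope R_scope.

(* Coquelicot states equalities over its structure carriers, where [ring] and [field] fail. *)
Ltac R_eq := match goal with |- @eq _ ?a ?b => change (@eq R a b) end.

Lemma exp_le_exp (x y : R) : x <= y -> exp x <= exp y.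
Proof. intros [H|H]; [left; apply exp_increasing, H | right; rewrite H; reflexivity]. Qed.

Lemma exp_neg_half_sqr_le (z : R) : 0 < z -> exp (- z ^ 2 / 2) <= 2 / z ^ 2.
Proof.
  intros Hz. assert (H := exp_ineq1_le (z ^ 2 / 2)). assert (0 < exp (z ^ 2 / 2)) by apply exp_pos.
  replace (- z ^ 2 / 2) with (- (z ^ 2 / 2)) by field. rewrite exp_Ropp.
  apply Rmult_le_reg_r with (exp (z ^ 2 / 2) * z ^ 2); [nra|].
  replace (/ exp (z ^ 2 / 2) * (exp (z ^ 2 / 2) * z ^ 2)) with (z ^ 2) by (field; lra).
  replace (2 / z ^ 2 * (exp (z ^ 2 / 2) * z ^ 2)) with (2 * exp (z ^ 2 / 2)) by (field; nra).
  lra.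
Qed.

Lemma exp_neg_half_ge : 1 / 2 <= exp (- (1 / 2)).
Proof.
  assert (H : exp (1 / 2) * exp (1 / 2) = exp 1) by (rewrite <- exp_plus; f_equal; field).
  assert (H3 := exp_le_3). assert (P := exp_pos (1 / 2)).
  rewrite exp_Ropp. apply Rmult_le_reg_r with (exp (1 / 2)); [exact P|].
  rewrite Rinv_l by lra. nra.
Qed.

Lemma one_plus_sqr_mul_exp_le (t : R) : (1 + t ^ 2) * exp (t - t ^ 2 / 2) <= 11 / 2.
Proof.
  assert (H := exp_ineq1_le (t ^ 2 / 2 - t)). assert (P := exp_pos (t ^ 2 / 2 - t)).
  replace (t - t ^ 2 / 2) with (- (t ^ 2 / 2 - t)) by field. rewrite exp_Ropp.
  apply Rmult_le_reg_r with (exp (t ^ 2 / 2 - t)); [exact P|].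
  rewrite Rmult_assoc, Rinv_l by lra. assert (0 <= (t - 11 / 7) ^ 2) by apply pow2_ge_0. nra.
Qed.

Lemma cosh_le (a b : R) : 0 <= a <= b -> exp a + exp (- a) <= exp b + exp (- b).
Proof.
  intros [Ha Hab]. rewrite !exp_Ropp.
  assert (X1 : 1 <= exp a) by (rewrite <- exp_0; apply exp_le_exp, Ha).
  assert (XY : exp a <= exp b) by (apply exp_le_exp, Hab).
  assert (/ (exp a * exp b) <= 1) by (rewrite <- Rinv_1; apply Rinv_le_contravar; nra).
  assert (E : exp b + / exp b - (exp a + / exp a) = (exp b - exp a) * (1 - / (exp a * exp b)))
    by (field; lra).
  assert (0 <= (exp b - exp a) * (1 - / (exp a * exp b))) by (apply Rmult_le_pos; lra).
  lra.
Qed.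

(* Convexity of [sinh] on [0, +oo): [k v = v sinh t - sinh (t v)] vanishes at [0] and [1] and
   has a nonincreasing derivative, so it is nonnegative in between. *)
Lemma sinh_mul_le (t v : R) : 0 <= t -> 0 <= v <= 1 ->
  exp (t * v) - exp (- (t * v)) <= v * (exp t - exp (- t)).
Proof.
  intros Ht Hv.
  set (S := exp t - exp (- t)).
  set (k := fun v => v * S - (exp (t * v) - exp (- (t * v)))).
  set (k' := fun v => S - t * (exp (t * v) + exp (- (t * v)))).
  assert (Dk : forall x, derivable_pt_lim k x (k' x)).
  { intros x. apply is_derive_Reals. unfold k, k'. auto_derive; [auto | R_eq; ring]. }
  assert (k0 : k 0 = 0) by (unfold k; rewrite Rmult_0_r, Ropp_0, exp_0; ring).
  assert (k1 : k 1 = 0) by (unfold k, S; rewrite Rmult_1_r; ring).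
  assert (k'_mono : forall a b, 0 <= a <= b -> k' b <= k' a).
  { intros a b Hab. unfold k'. assert (H := cosh_le (t * a) (t * b) ltac:(split; nra)).
    apply Rplus_le_compat_l, Ropp_le_contravar, Rmult_le_compat_l; auto. }
  enough (0 <= k v) by (unfold k in *; lra).
  destruct (Req_dec v 0) as [->|E0]; [lra|]. destruct (Req_dec v 1) as [->|E1]; [lra|].
  destruct (MVT_cor2 k k' 0 v ltac:(lra) (fun c _ => Dk c)) as [c1 [Ec1 Hc1]].
  destruct (MVT_cor2 k k' v 1 ltac:(lra) (fun c _ => Dk c)) as [c2 [Ec2 Hc2]].
  assert (Hk := k'_mono c1 c2 ltac:(lra)). rewrite k0 in Ec1. rewrite k1 in Ec2.
  destruct (Rle_dec 0 (k' c1)) as [P1|P1]; [nra|].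
  assert (k' c2 < 0) by lra. nra.
Qed.

Lemma sqrt_2PI_ge : 2.44 <= sqrt (2 * PI).
Proof.
  assert (H := PI2_3_2). rewrite <- (sqrt_pow2 2.44) by lra. apply sqrt_le_1_alt. lra.
Qed.

Lemma sqrt_2PI_gt0 : 0 < sqrt (2 * PI).
Proof. assert (H := sqrt_2PI_ge). lra. Qed.

Lemma Rabs_sqr_sub_mul_le (b x y : R) : Rabs (b ^ 2 - x * y) <=
  Rabs (x - b) * Rabs (y - b) + Rabs b * Rabs (x - b) + Rabs b * Rabs (y - b).
Proof.
  replace (b ^ 2 - x * y) with (- ((x - b) * (y - b)) + - b * (x - b) + - b * (y - b)) by ring.
  rewrite <- (Rabs_Ropp b), <- !Rabs_mult, <- (Rabs_Ropp ((x - b) * (y - b))).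
  eapply Rle_trans; [apply Rabs_triang|]. apply Rplus_le_compat_r, Rabs_triang.
Qed.

Lemma le_of_derive_sign (f f' : R -> R) (m : R) : (forall x, is_derive f x (f' x)) ->
  (forall x, Rmin 0 m <= x <= Rmax 0 m -> 0 <= x * f' x) -> f 0 <= f m.
Proof.
  intros Hd Hs.
  assert (Hd' : forall a b c, a <= c <= b -> derivable_pt_lim f c (f' c))
    by (intros; apply is_derive_Reals, Hd).
  destruct (Rtotal_order 0 m) as [Hm|[<-|Hm]]; [| lra |].
  - destruct (MVT_cor2 f f' 0 m Hm (Hd' 0 m)) as [c [Ec Hc]].
    assert (H := Hs c). rewrite Rmin_left, Rmax_right in H by lra. specialize (H ltac:(lra)). nra.
  - destruct (MVT_cor2 f f' m 0 Hm (Hd' m 0)) as [c [Ec Hc]].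
    assert (H := Hs c). rewrite Rmin_right, Rmax_left in H by lra. specialize (H ltac:(lra)). nra.
Qed.

Lemma RInt_scal_R (f : R -> R) (a b c : R) :
  ex_RInt f a b -> RInt (fun x => c * f x) a b = c * RInt f a b.
Proof. exact (@RInt_scal R_CompleteNormedModule f a b c). Qed.

Lemma RInt_comp_mult_R (f : R -> R) (u a b : R) : ex_RInt f (u * a) (u * b) ->
  RInt (fun y => u * f (u * y)) a b = RInt f (u * a) (u * b).
Proof.
  intros Hf. rewrite <- (Rplus_0_r (u * a)), <- (Rplus_0_r (u * b)).
  rewrite <- (@RInt_comp_lin R_CompleteNormedModule f u 0 a b) by now rewrite !Rplus_0_r.
  apply RInt_ext; intros; now rewrite Rplus_0_r.
Qed.

Lemma Riemann_of_is_RInt (f : R -> R) (a b v : R) : is_RInt f a b v -> Defs.is_RInt f a b v.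
Proof.
  intros H. assert (Hex : ex_RInt f a b) by (exists v; exact H).
  exists (ex_RInt_Reals_0 _ _ _ Hex).
  rewrite <- RInt_Reals. apply (@is_RInt_unique R_CompleteNormedModule), H.
Qed.

Lemma improper_int_unique (f : R -> R) (l1 l2 : R) :
  improper_int f l1 -> improper_int f l2 -> l1 = l2.
Proof.
  intros H1 H2. apply Rminus_diag_uniq, Rabs_eq_0.
  apply Rle_antisym; [|apply Rabs_pos]. apply le_epsilon. intros e He.
  destruct (H1 (e / 2) ltac:(lra)) as [M1 HM1]. destruct (H2 (e / 2) ltac:(lra)) as [M2 HM2].
  assert (A1 := Rmax_l M1 M2). assert (A2 := Rmax_r M1 M2). set (M := Rmax M1 M2) in *.
  destruct (HM1 (- M) M ltac:(lra) ltac:(lra)) as [v1 [[pr1 E1] B1]].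
  destruct (HM2 (- M) M ltac:(lra) ltac:(lra)) as [v2 [[pr2 E2] B2]].
  assert (Hv : v2 = v1) by (rewrite <- E1, <- E2; apply RiemannInt_P5). rewrite Hv in B2.
  replace (l1 - l2) with ((v1 - l2) - (v1 - l1)) by ring.
  eapply Rle_trans; [apply Rabs_triang|]. rewrite Rabs_Ropp. lra.
Qed.

Lemma expect2_unique (g : R -> R -> R) (m th s l1 l2 : R) :
  expect2 g m th s l1 -> expect2 g m th s l2 -> l1 = l2.
Proof.
  intros [h1 [Hx1 Hy1]] [h2 [Hx2 Hy2]].
  assert (h1 = h2) as <-
    by (apply functional_extensionality; intros y;
        exact (improper_int_unique _ _ _ (Hx1 y) (Hx2 y))).
  exact (improper_int_unique _ _ _ Hy1 Hy2).
Qed.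

(** * The Gaussian integral *)

Definition gauss (t : R) : R := exp (- (t ^ 2)).
Definition gauss_int (x : R) : R := RInt gauss 0 x.
Definition gauss_param_integrand (x t : R) : R := exp (- (x ^ 2 * (1 + t ^ 2))) / (1 + t ^ 2).
Definition gauss_param (x : R) : R := RInt (gauss_param_integrand x) 0 1.

Lemma continuous_gauss (x : R) : continuous gauss x.
Proof. apply (@ex_derive_continuous R_AbsRing R_NormedModule); unfold gauss; auto_derive; auto. Qed.

Lemma ex_RInt_gauss (a b : R) : ex_RInt gauss a b.
Proof. apply (@ex_RInt_continuous R_CompleteNormedModule); intros; apply continuous_gauss. Qed.

Lemma is_derive_gauss_int (x : R) : is_derive gauss_int x (gauss x).
Proof.
  apply is_derive_RInt with 0.
  - apply filter_forall; intros b; apply (@RInt_correct R_CompleteNormedModule), ex_RInt_gauss.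
  - apply continuous_gauss.
Qed.

Lemma is_derive_gauss_param_integrand (x t : R) :
  is_derive (fun u => gauss_param_integrand u t) x (- 2 * x * exp (- (x ^ 2 * (1 + t ^ 2)))).
Proof. unfold gauss_param_integrand; auto_derive; [nra|]. R_eq. simpl. field. nra. Qed.

Lemma continuous_gauss_param_integrand (x t : R) : continuous (gauss_param_integrand x) t.
Proof.
  apply (@ex_derive_continuous R_AbsRing R_NormedModule).
  unfold gauss_param_integrand; auto_derive; nra.
Qed.

Lemma ex_RInt_gauss_param_integrand (x a b : R) : ex_RInt (gauss_param_integrand x) a b.
Proof.
  apply (@ex_RInt_continuous R_CompleteNormedModule); intros.
  apply continuous_gauss_param_integrand.
Qed.

Lemma is_derive_gauss_param (x : R) : is_derive gauss_param x (- 2 * gauss x * gauss_int x).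
Proof.
  replace (- 2 * gauss x * gauss_int x)
    with (RInt (fun t => Derive (fun u => gauss_param_integrand u t) x) 0 1).
  - apply is_derive_RInt_param.
    + apply filter_forall; intros y t _; eexists; apply is_derive_gauss_param_integrand.
    + intros t _.
      apply continuity_2d_pt_ext with (fun u v => - 2 * u * exp (- (u ^ 2 * (1 + v ^ 2)))).
      * intros u v; symmetry; apply is_derive_unique, is_derive_gauss_param_integrand.
      * repeat first
          [ apply continuity_2d_pt_mult | apply continuity_2d_pt_plus
          | apply continuity_2d_pt_opp | apply continuity_2d_pt_const
          | apply continuity_2d_pt_id1 | apply continuity_2d_pt_id2
          | apply continuity_1d_2d_pt_comp; [apply derivable_continuous_pt, derivable_pt_exp|] ];
          simpl.
    + apply filter_forall; intros y; apply ex_RInt_gauss_param_integrand.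
  - rewrite (RInt_ext _ (fun t => (- 2 * gauss x) * (x * gauss (x * t)))).
    + rewrite RInt_scal_R, RInt_comp_mult_R, Rmult_0_r, Rmult_1_r;
        [reflexivity | apply ex_RInt_gauss |].
      apply (@ex_RInt_continuous R_CompleteNormedModule); intros.
      apply (@ex_derive_continuous R_AbsRing R_NormedModule); unfold gauss; auto_derive; auto.
    + intros t _.
      rewrite (is_derive_unique (fun u : R => gauss_param_integrand u t) x _
                 (is_derive_gauss_param_integrand x t)).
      unfold gauss. replace (- (x ^ 2 * (1 + t ^ 2))) with (- (x ^ 2) + - ((x * t) ^ 2)) by ring.
      rewrite exp_plus. R_eq. ring.
Qed.

Lemma gauss_int_sqr_plus_param (x : R) : gauss_int x ^ 2 + gauss_param x = PI / 4.
Proof.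
  set (F := fun x => gauss_int x ^ 2 + gauss_param x).
  assert (dF : forall x, is_derive F x 0).
  { intros y. replace 0 with (INR 2 * gauss y * gauss_int y ^ pred 2 + - 2 * gauss y * gauss_int y)
      by (simpl; ring).
    apply (@is_derive_plus R_AbsRing R_NormedModule); [|apply is_derive_gauss_param].
    apply (is_derive_pow gauss_int 2 y), is_derive_gauss_int. }
  assert (atan01 : is_RInt (fun t => / (1 + t ^ 2)) 0 1 (PI / 4)).
  { replace (PI / 4) with (atan 1 - atan 0) by (rewrite atan_1, atan_0; ring).
    apply (@is_RInt_derive R_CompleteNormedModule).
    - intros t _. apply is_derive_Reals, derivable_pt_lim_atan.
    - intros t _. apply (@ex_derive_continuous R_AbsRing R_NormedModule). auto_derive. nra. }
  assert (F0 : F 0 = PI / 4).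
  { unfold F, gauss_int, gauss_param. rewrite RInt_point.
    rewrite (RInt_ext _ (fun t => / (1 + t ^ 2))).
    - rewrite (is_RInt_unique _ _ _ _ atan01). unfold zero; simpl. R_eq. ring.
    - intros t _. unfold gauss_param_integrand. replace (- (0 ^ 2 * (1 + t ^ 2))) with 0 by ring.
      rewrite exp_0. R_eq. field. nra. }
  fold (F x). rewrite <- F0. destruct (Rtotal_order 0 x) as [Hx|[<-|Hx]]; [|reflexivity|].
  - symmetry. apply (@eq_is_derive R_NormedModule F 0 x); auto.
  - apply (@eq_is_derive R_NormedModule F x 0); auto.
Qed.

Lemma gauss_param_bounds (x : R) : 0 <= gauss_param x <= gauss x.
Proof.
  unfold gauss_param. split.
  - apply RInt_ge_0; [lra | apply ex_RInt_gauss_param_integrand |].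
    intros t _. unfold gauss_param_integrand. apply Rlt_le, Rdiv_lt_0_compat; [apply exp_pos | nra].
  - replace (gauss x) with (RInt (fun _ => gauss x) 0 1)
      by (rewrite RInt_const; unfold scal; simpl; unfold mult; simpl; R_eq; ring).
    apply RInt_le; [lra | apply ex_RInt_gauss_param_integrand | apply ex_RInt_const |].
    intros t _. unfold gauss_param_integrand, gauss.
    assert (exp (- (x ^ 2 * (1 + t ^ 2))) <= exp (- x ^ 2)) by (apply exp_le_exp; nra).
    assert (0 < exp (- (x ^ 2 * (1 + t ^ 2)))) by apply exp_pos.
    assert (/ (1 + t ^ 2) <= 1) by (rewrite <- Rinv_1; apply Rinv_le_contravar; nra).
    unfold Rdiv. nra.
Qed.

Lemma gauss_int_ge0 (x : R) : 0 <= x -> 0 <= gauss_int x.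
Proof.
  intros Hx. apply RInt_ge_0; [exact Hx | apply ex_RInt_gauss |].
  intros; apply Rlt_le, exp_pos.
Qed.

Lemma gauss_int_odd (x : R) : gauss_int (- x) = - gauss_int x.
Proof.
  unfold gauss_int. replace (- x) with (-1 * x) by ring.
  rewrite <- (Rmult_0_r (-1)) at 1.
  rewrite <- RInt_comp_mult_R by apply ex_RInt_gauss.
  rewrite (RInt_ext _ (fun y => -1 * gauss y)).
  - rewrite RInt_scal_R by apply ex_RInt_gauss. ring.
  - intros y _. unfold gauss. replace ((-1 * y) ^ 2) with (y ^ 2) by ring. reflexivity.
Qed.

(* From [I^2 + G = PI/4] with [0 <= G <= gauss x]:  [(sqrt PI/2 - I) (sqrt PI/2 + I) = G]. *)
Lemma gauss_int_tail (x : R) : 0 <= x ->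
  0 <= sqrt PI / 2 - gauss_int x <= 2 / sqrt PI * gauss x.
Proof.
  intros Hx. assert (HI := gauss_int_ge0 x Hx). assert (HG := gauss_param_bounds x).
  assert (HH := gauss_int_sqr_plus_param x).
  assert (Hq : 0 < sqrt PI) by apply sqrt_lt_R0, PI_RGT_0.
  assert (Hs : sqrt PI * sqrt PI = PI) by (apply sqrt_sqrt; left; apply PI_RGT_0).
  assert (Hg := exp_pos (- x ^ 2)). fold (gauss x) in Hg.
  set (q := sqrt PI) in *. set (I := gauss_int x) in *.
  assert (E : (q / 2 - I) * (q / 2 + I) = gauss_param x) by nra.
  assert (I <= q / 2) by nra.
  split; [lra|].
  apply Rmult_le_reg_r with (q / 2 + I); [lra|]. rewrite E.
  apply Rle_trans with (2 / q * gauss x * (q / 2)).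
  { replace (2 / q * gauss x * (q / 2)) with (gauss x) by (field; lra). lra. }
  apply Rmult_le_compat_l; [|lra]. apply Rmult_le_pos; [apply Rlt_le, Rdiv_lt_0_compat|]; lra.
Qed.

(** * The standard normal density and distribution function *)

Lemma phi_pos (x : R) : 0 < phi x.
Proof. apply Rdiv_lt_0_compat; [apply exp_pos | apply sqrt_2PI_gt0]. Qed.

Lemma phi_even (x : R) : phi (- x) = phi x.
Proof. unfold phi. replace ((- x) ^ 2) with (x ^ 2) by ring. reflexivity. Qed.

Lemma phi_le_sqr (a b : R) : a ^ 2 <= b ^ 2 -> phi b <= phi a.
Proof.
  intros H. unfold phi, Rdiv. apply Rmult_le_compat_r.
  - apply Rlt_le, Rinv_0_lt_compat, sqrt_2PI_gt0.
  - apply exp_le_exp. lra.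
Qed.

Lemma is_derive_phi (x : R) : is_derive phi x (- x * phi x).
Proof.
  assert (H := sqrt_2PI_gt0). unfold phi. auto_derive; [auto|].
  R_eq. simpl. unfold Rdiv. field. lra.
Qed.

Lemma Derive_phi (x : R) : Derive phi x = - x * phi x.
Proof. apply is_derive_unique, is_derive_phi. Qed.

Lemma continuous_phi (x : R) : continuous phi x.
Proof. apply (@ex_derive_continuous R_AbsRing R_NormedModule). eexists; apply is_derive_phi. Qed.

Lemma ex_RInt_phi (a b : R) : ex_RInt phi a b.
Proof. apply (@ex_RInt_continuous R_CompleteNormedModule). intros; apply continuous_phi. Qed.

(* Unlike the usual distribution function, [Phi 0 = 0]: [Phi] takes values in [(-1/2, 1/2)]. *)
Definition Phi (z : R) : R := RInt phi 0 z.

Lemma is_derive_Phi (x : R) : is_derive Phi x (phi x).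
Proof.
  apply is_derive_RInt with 0.
  - apply filter_forall; intros b. apply (@RInt_correct R_CompleteNormedModule), ex_RInt_phi.
  - apply continuous_phi.
Qed.

Lemma Derive_Phi (x : R) : Derive Phi x = phi x.
Proof. apply is_derive_unique, is_derive_Phi. Qed.

Lemma Phi_0 : Phi 0 = 0.
Proof. exact (@RInt_point R_CompleteNormedModule 0 phi). Qed.

Lemma RInt_phi (a b : R) : RInt phi a b = Phi b - Phi a.
Proof.
  assert (H := @RInt_Chasles R_CompleteNormedModule phi 0 a b (ex_RInt_phi _ _) (ex_RInt_phi _ _)).
  unfold Phi. simpl in H. unfold plus in H; simpl in H. lra.
Qed.

Lemma Phi_le (a b : R) : a <= b -> Phi a <= Phi b.
Proof.
  intros Hab. cut (0 <= RInt phi a b); [rewrite RInt_phi; lra|].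
  apply RInt_ge_0; [exact Hab | apply ex_RInt_phi | intros; apply Rlt_le, phi_pos].
Qed.

Lemma Phi_gauss_int (z : R) : Phi z = gauss_int (/ sqrt 2 * z) / sqrt PI.
Proof.
  assert (H2 : 0 < sqrt 2) by (apply sqrt_lt_R0; lra).
  assert (HP : 0 < sqrt PI) by apply sqrt_lt_R0, PI_RGT_0.
  assert (H22 : sqrt 2 * sqrt 2 = 2) by (apply sqrt_sqrt; lra).
  unfold Phi, gauss_int.
  rewrite (RInt_ext _ (fun y => / sqrt PI * (/ sqrt 2 * gauss (/ sqrt 2 * y)))).
  - rewrite RInt_scal_R, RInt_comp_mult_R, Rmult_0_r; [unfold Rdiv; ring | apply ex_RInt_gauss |].
    apply (@ex_RInt_continuous R_CompleteNormedModule). intros.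
    apply (@ex_derive_continuous R_AbsRing R_NormedModule). unfold gauss. auto_derive. auto.
  - intros x _. unfold phi, gauss. rewrite sqrt_mult by (lra || left; apply PI_RGT_0).
    replace (- (/ sqrt 2 * x) ^ 2) with (- x ^ 2 / 2).
    + R_eq. field. lra.
    + replace ((/ sqrt 2 * x) ^ 2) with (x ^ 2 / (sqrt 2 * sqrt 2)) by (field; lra).
      rewrite H22. field.
Qed.

Lemma Phi_odd (z : R) : Phi (- z) = - Phi z.
Proof.
  rewrite !Phi_gauss_int. replace (/ sqrt 2 * - z) with (- (/ sqrt 2 * z)) by ring.
  rewrite gauss_int_odd. unfold Rdiv. ring.
Qed.

Lemma Phi_tail_exp (z : R) : 0 <= z -> 0 <= 1 / 2 - Phi z <= 2 / PI * exp (- z ^ 2 / 2).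
Proof.
  intros Hz. rewrite Phi_gauss_int.
  assert (H2 : 0 < sqrt 2) by (apply sqrt_lt_R0; lra).
  assert (HP : 0 < sqrt PI) by apply sqrt_lt_R0, PI_RGT_0.
  assert (H22 : sqrt 2 * sqrt 2 = 2) by (apply sqrt_sqrt; lra).
  assert (HPP : sqrt PI * sqrt PI = PI) by (apply sqrt_sqrt; left; apply PI_RGT_0).
  assert (Hw : 0 <= / sqrt 2 * z) by (apply Rmult_le_pos; [apply Rlt_le, Rinv_0_lt_compat|]; lra).
  assert (E : gauss (/ sqrt 2 * z) = exp (- z ^ 2 / 2)).
  { unfold gauss. f_equal.
    replace ((/ sqrt 2 * z) ^ 2) with (z ^ 2 / (sqrt 2 * sqrt 2)) by (field; lra).
    rewrite H22. field. }
  destruct (gauss_int_tail _ Hw) as [T1 T2]. rewrite E in T2.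
  set (q := sqrt PI) in *. rewrite <- HPP.
  replace (1 / 2 - gauss_int (/ sqrt 2 * z) / q) with ((q / 2 - gauss_int (/ sqrt 2 * z)) / q)
    by (field; lra).
  replace (2 / (q * q) * exp (- z ^ 2 / 2)) with (2 / q * exp (- z ^ 2 / 2) / q) by (field; lra).
  assert (0 < / q) by (apply Rinv_0_lt_compat; lra).
  unfold Rdiv at 1 3. split; [apply Rmult_le_pos | apply Rmult_le_compat_r]; lra.
Qed.

Lemma Phi_bound (z : R) : - (1 / 2) <= Phi z <= 1 / 2.
Proof.
  destruct (Rle_dec 0 z) as [H|H].
  - destruct (Phi_tail_exp z H). assert (0 <= Phi z) by (rewrite <- Phi_0; apply Phi_le, H). lra.
  - destruct (Phi_tail_exp (- z)); [lra|]. rewrite Phi_odd in *.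
    assert (Phi z <= 0) by (rewrite <- Phi_0; apply Phi_le; lra). lra.
Qed.

Lemma phi_le_exp (z : R) : phi z <= exp (- z ^ 2 / 2).
Proof.
  assert (H0 := exp_pos (- z ^ 2 / 2)). assert (Hs := sqrt_2PI_ge).
  unfold phi, Rdiv. rewrite <- (Rmult_1_r (exp _)) at 2. apply Rmult_le_compat_l; [lra|].
  rewrite <- Rinv_1. apply Rinv_le_contravar; lra.
Qed.

Lemma mul_phi_tail (z : R) : 1 <= z -> 0 <= z * phi z <= 2 / z.
Proof.
  intros Hz. assert (H := phi_pos z). assert (H2 := phi_le_exp z).
  assert (H3 := exp_neg_half_sqr_le z ltac:(lra)). split; [nra|].
  apply Rle_trans with (z * (2 / z ^ 2)); [apply Rmult_le_compat_l; lra | right; field; lra].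
Qed.

Lemma phi_tail (z : R) : 1 <= z -> phi z <= 2 / z.
Proof. intros Hz. destruct (mul_phi_tail z Hz). assert (Hp := phi_pos z). nra. Qed.

Lemma Phi_tail (z : R) : 1 <= z -> 0 <= 1 / 2 - Phi z <= 2 / z.
Proof.
  intros Hz. destruct (Phi_tail_exp z ltac:(lra)) as [T1 T2]. split; [exact T1|].
  assert (H3 := exp_neg_half_sqr_le z ltac:(lra)). assert (HP := PI2_3_2).
  assert (2 / PI <= 1) by (apply Rmult_le_reg_r with PI; [lra|]; unfold Rdiv; field_simplify; lra).
  assert (2 / z ^ 2 <= 2 / z) by (unfold Rdiv; apply Rmult_le_compat_l, Rinv_le_contravar; nra).
  assert (0 <= 2 / PI) by (apply Rlt_le, Rdiv_lt_0_compat; lra).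
  assert (0 < exp (- z ^ 2 / 2)) by apply exp_pos.
  nra.
Qed.

Lemma mul_phi_sub_phi_ge0 (t x : R) : 0 <= t -> 0 <= x * (phi (t - x) - phi (t + x)).
Proof.
  intros Ht. destruct (Rle_dec 0 x).
  - assert (phi (t + x) <= phi (t - x)) by (apply phi_le_sqr; nra). nra.
  - assert (phi (t - x) <= phi (t + x)) by (apply phi_le_sqr; nra). nra.
Qed.

Lemma phi_sub_phi_le (t v : R) : 0 <= t -> 0 <= v <= 1 ->
  phi (t - v) - phi (t + v) <= v * exp (t - t ^ 2 / 2) / sqrt (2 * PI).
Proof.
  intros Ht Hv. assert (HW := sqrt_2PI_gt0).
  assert (E : phi (t - v) - phi (t + v) =
     exp (- ((t ^ 2 + v ^ 2) / 2)) * (exp (t * v) - exp (- (t * v))) / sqrt (2 * PI)).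
  { unfold phi.
    replace (- (t - v) ^ 2 / 2) with (- ((t ^ 2 + v ^ 2) / 2) + t * v) by field.
    replace (- (t + v) ^ 2 / 2) with (- ((t ^ 2 + v ^ 2) / 2) + - (t * v)) by field.
    rewrite !exp_plus. field. lra. }
  rewrite E. unfold Rdiv. apply Rmult_le_compat_r; [apply Rlt_le, Rinv_0_lt_compat, HW|].
  assert (E1 : exp (- ((t ^ 2 + v ^ 2) / 2)) <= exp (- (t ^ 2 / 2))) by (apply exp_le_exp; nra).
  assert (S1 := sinh_mul_le t v Ht Hv).
  assert (S0 : 0 <= exp (t * v) - exp (- (t * v)))
    by (assert (H := exp_le_exp (- (t * v)) (t * v)); nra).
  replace (t - t ^ 2 * / 2) with (- (t ^ 2 / 2) + t) by field. rewrite exp_plus.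
  assert (P1 := exp_pos (- (t ^ 2 / 2))). assert (P2 := exp_pos (- t)).
  apply Rle_trans with (exp (- (t ^ 2 / 2)) * (v * (exp t - exp (- t)))).
  - apply Rmult_le_compat; auto. apply Rlt_le, exp_pos.
  - assert (0 <= exp (- (t ^ 2 / 2)) * v * exp (- t))
      by (apply Rmult_le_pos; [apply Rmult_le_pos|]; lra).
    nra.
Qed.

Lemma one_plus_sqr_mul_phi_sub_phi_le (t v : R) : 0 <= t -> 0 <= v <= 1 ->
  (1 + t ^ 2) * (phi (t - v) - phi (t + v)) <= 2 * v * (1 + phi 1).
Proof.
  intros Ht Hv. assert (HW := sqrt_2PI_ge). assert (HE := exp_neg_half_ge).
  assert (B1 := phi_sub_phi_le t v Ht Hv). assert (B2 := one_plus_sqr_mul_exp_le t).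
  assert (E : phi 1 = exp (- (1 / 2)) / sqrt (2 * PI)) by (unfold phi; do 2 f_equal; field).
  assert (Hex := exp_pos (t - t ^ 2 / 2)).
  apply Rle_trans with (v * (11 / 2) / sqrt (2 * PI)).
  - apply Rle_trans with ((1 + t ^ 2) * (v * exp (t - t ^ 2 / 2) / sqrt (2 * PI))).
    + apply Rmult_le_compat_l; nra.
    + unfold Rdiv. rewrite <- !Rmult_assoc.
      apply Rmult_le_compat_r; [left; apply Rinv_0_lt_compat; lra | nra].
  - rewrite E. apply Rmult_le_reg_r with (sqrt (2 * PI)); [lra|]. field_simplify; nra.
Qed.

Lemma mul_phi_sub_phi_le (t x : R) : 0 <= t -> -1 <= x <= 1 ->
  (1 + t ^ 2) * (x * (phi (t - x) - phi (t + x))) <= 2 * x ^ 2 * (1 + phi 1).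
Proof.
  intros Ht Hx. assert (Hv := one_plus_sqr_mul_phi_sub_phi_le t).
  destruct (Rle_dec 0 x).
  - assert (H := Hv x Ht ltac:(lra)). assert (0 <= 1 + t ^ 2) by nra. nra.
  - assert (H := Hv (- x) Ht ltac:(lra)). replace (t - - x) with (t + x) in H by ring.
    replace (t + - x) with (t - x) in H by ring. nra.
Qed.

(** * Second moment of a normal law over an interval *)

Definition mom2 (s m x : R) : R := (x ^ 2 - s ^ 2) * npdf m s x.

Definition mom2_prim (s m x : R) : R :=
  - s * (x + m) * phi ((x - m) / s) + m ^ 2 * Phi ((x - m) / s).

Lemma is_derive_Phi_std (s m x : R) : 0 < s ->
  is_derive (fun x => Phi ((x - m) / s)) x (npdf m s x).
Proof.
  intros Hs. replace (npdf m s x) with (scal (/ s) (phi ((x - m) / s)))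
    by (unfold npdf, scal; simpl; unfold mult; simpl; R_eq; field; lra).
  apply (is_derive_comp (K := R_AbsRing) (V := R_NormedModule) Phi (fun x => (x - m) / s)).
  - apply is_derive_Phi.
  - auto_derive; [auto|]. R_eq. field. lra.
Qed.

Lemma is_derive_mom2_prim (s m x : R) : 0 < s -> is_derive (mom2_prim s m) x (mom2 s m x).
Proof.
  intros Hs. assert (H := sqrt_2PI_gt0).
  assert (D1 : is_derive (fun x => - s * (x + m) * phi ((x - m) / s)) x
                 ((x ^ 2 - m ^ 2 - s ^ 2) * npdf m s x)).
  { unfold npdf, phi. auto_derive; [auto|]. simpl. unfold Rdiv, Rminus. R_eq. field. lra. }
  assert (D2 := is_derive_scal _ x (m ^ 2) _ (is_derive_Phi_std s m x Hs)).
  replace (mom2 s m x) with (plus ((x ^ 2 - m ^ 2 - s ^ 2) * npdf m s x) (m ^ 2 * npdf m s x))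
    by (unfold mom2, plus; simpl; R_eq; ring).
  exact (is_derive_plus (K := R_AbsRing) (V := R_NormedModule) _ _ _ _ _ D1 D2).
Qed.

Lemma is_RInt_mom2 (s m a b : R) : 0 < s ->
  is_RInt (mom2 s m) a b (mom2_prim s m b - mom2_prim s m a).
Proof.
  intros Hs. apply (@is_RInt_derive R_CompleteNormedModule).
  - intros x _. apply is_derive_mom2_prim, Hs.
  - intros x _. apply (@ex_derive_continuous R_AbsRing R_NormedModule).
    unfold mom2, npdf, phi. auto_derive. repeat split; lra.
Qed.

Lemma mom2_prim_tail (s m w : R) : 0 < s -> 1 <= w ->
  Rabs (mom2_prim s m (m + s * w) - m ^ 2 / 2) <= (2 * s ^ 2 + 4 * Rabs m * s + 2 * m ^ 2) / w /\
  Rabs (mom2_prim s m (m - s * w) + m ^ 2 / 2) <= (2 * s ^ 2 + 4 * Rabs m * s + 2 * m ^ 2) / w.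
Proof.
  intros Hs Hw. unfold mom2_prim.
  replace ((m + s * w - m) / s) with w by (field; lra).
  replace ((m - s * w - m) / s) with (- w) by (field; lra).
  rewrite phi_even, Phi_odd.
  set (u := 2 / w).
  replace ((2 * s ^ 2 + 4 * Rabs m * s + 2 * m ^ 2) / w)
    with (s ^ 2 * u + 2 * s * Rabs m * u + m ^ 2 * u) by (unfold u; field; lra).
  destruct (mul_phi_tail w Hw) as [A1 A2]. assert (B1 := phi_pos w). assert (B2 := phi_tail w Hw).
  destruct (Phi_tail w Hw) as [C1 C2]. fold u in A2, B2, C2.
  assert (Hs2 : 0 <= s ^ 2) by nra. assert (Hm2 : 0 <= m ^ 2) by nra.
  assert (P1 : 0 <= s ^ 2 * (w * phi w) <= s ^ 2 * u)
    by (split; apply Rmult_le_compat_l || apply Rmult_le_pos; lra).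
  assert (P2 : Rabs (s * m * phi w) <= s * Rabs m * u).
  { rewrite !Rabs_mult, (Rabs_right s), (Rabs_right (phi w)) by lra.
    apply Rmult_le_compat_l; [apply Rmult_le_pos; [lra | apply Rabs_pos] | exact B2]. }
  apply Rabs_le_between in P2.
  assert (P3 : 0 <= m ^ 2 * (1 / 2 - Phi w) <= m ^ 2 * u)
    by (split; apply Rmult_le_compat_l || apply Rmult_le_pos; lra).
  split; apply Rabs_le; split; nra.
Qed.

Lemma mom2_prim_lim (s m eps : R) : 0 < s -> 0 < eps -> exists N, 0 < N /\
  (forall b, N <= b -> Rabs (mom2_prim s m b - m ^ 2 / 2) < eps) /\
  (forall a, a <= - N -> Rabs (mom2_prim s m a + m ^ 2 / 2) < eps).
Proof.
  intros Hs He.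
  set (K := 2 * s ^ 2 + 4 * Rabs m * s + 2 * m ^ 2).
  assert (Hm := Rabs_pos m). assert (Hm1 := Rle_abs m). assert (Hm2 := Rle_abs (- m)).
  rewrite Rabs_Ropp in Hm2.
  assert (HK : 0 <= K) by (unfold K; nra).
  set (W := K / eps + 1).
  assert (HW : 1 <= W) by (assert (0 <= K / eps) by (apply Rdiv_le_0_compat; lra); unfold W; lra).
  assert (KW : forall w, W <= w -> K / w < eps).
  { intros w Hw. apply Rle_lt_trans with (K / W).
    - apply Rmult_le_compat_l; [exact HK|]. apply Rinv_le_contravar; lra.
    - apply Rmult_lt_reg_r with W; [lra|]. unfold W. field_simplify; lra. }
  exists (Rabs m + s * W). split; [nra|]. split.
  - intros b Hb. replace b with (m + s * ((b - m) / s)) by (field; lra).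
    assert (Hw : W <= (b - m) / s) by (apply Rmult_le_reg_r with s; [lra|]; field_simplify; nra).
    destruct (mom2_prim_tail s m ((b - m) / s) Hs ltac:(lra)) as [T _].
    eapply Rle_lt_trans; [exact T | apply KW, Hw].
  - intros a Ha. replace a with (m - s * ((m - a) / s)) by (field; lra).
    assert (Hw : W <= (m - a) / s) by (apply Rmult_le_reg_r with s; [lra|]; field_simplify; nra).
    destruct (mom2_prim_tail s m ((m - a) / s) Hs ltac:(lra)) as [_ T].
    eapply Rle_lt_trans; [exact T | apply KW, Hw].
Qed.

Definition band_ind (c x : R) : R := if Rlt_dec c (x ^ 2) then 0 else 1.

Definition trunc_mom2 (s m t : R) : R := mom2_prim s m t - mom2_prim s m (- t).

Lemma is_RInt_mom2_band_const (s m c al be k a b : R) : 0 < s -> a <= b ->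
  (forall x, a < x < b -> band_ind c x = k) ->
  is_RInt (fun x => mom2 s m x * (al - be * band_ind c x)) a b
    ((al - be * k) * (mom2_prim s m b - mom2_prim s m a)).
Proof.
  intros Hs Hab Hk. apply is_RInt_ext with (fun x => (al - be * k) * mom2 s m x).
  - intros x Hx. rewrite Rmin_left, Rmax_right in Hx by exact Hab.
    rewrite Hk by exact Hx. apply Rmult_comm.
  - apply (@is_RInt_scal R_NormedModule), is_RInt_mom2, Hs.
Qed.

Lemma is_RInt_mom2_band (s m c al be a b : R) :
  0 < s -> 0 < c -> a < - sqrt c -> sqrt c < b ->
  is_RInt (fun x => mom2 s m x * (al - be * band_ind c x)) a b
    (al * (mom2_prim s m b - mom2_prim s m a) - be * trunc_mom2 s m (sqrt c)).
Proof.
  intros Hs Hc Ha Hb.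
  assert (Hsc : 0 < sqrt c) by (apply sqrt_lt_R0, Hc).
  assert (Hcc : sqrt c * sqrt c = c) by (apply sqrt_sqrt; lra).
  assert (band_out : forall x, x < - sqrt c \/ sqrt c < x -> band_ind c x = 0).
  { intros x Hx. unfold band_ind. destruct (Rlt_dec c (x ^ 2)) as [_|N]; [reflexivity|].
    exfalso. apply N. destruct Hx; nra. }
  assert (band_in : forall x, - sqrt c < x < sqrt c -> band_ind c x = 1).
  { intros x Hx. unfold band_ind. destruct (Rlt_dec c (x ^ 2)); [nra | reflexivity]. }
  replace (al * (mom2_prim s m b - mom2_prim s m a) - be * trunc_mom2 s m (sqrt c)) with
    ((al - be * 0) * (mom2_prim s m (- sqrt c) - mom2_prim s m a)
     + (al - be * 1) * (mom2_prim s m (sqrt c) - mom2_prim s m (- sqrt c))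
     + (al - be * 0) * (mom2_prim s m b - mom2_prim s m (sqrt c)))
    by (unfold trunc_mom2; ring).
  apply (@is_RInt_Chasles R_NormedModule) with (sqrt c);
    [apply (@is_RInt_Chasles R_NormedModule) with (- sqrt c) |];
    apply is_RInt_mom2_band_const; try lra; intros x Hx; apply band_out || apply band_in; lra.
Qed.

Lemma improper_int_mom2_band (s m c al be : R) : 0 < s -> 0 < c ->
  improper_int (fun x => mom2 s m x * (al - be * band_ind c x))
    (al * m ^ 2 - be * trunc_mom2 s m (sqrt c)).
Proof.
  intros Hs Hc eps He.
  assert (Hal := Rabs_pos al). set (e := eps / (2 * (Rabs al + 1))).
  assert (He' : 0 < e) by (apply Rdiv_lt_0_compat; lra).
  destruct (mom2_prim_lim s m e Hs He') as [N [HN [Hb Ha]]].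
  assert (Hsc : 0 < sqrt c) by (apply sqrt_lt_R0, Hc).
  exists (Rmax N (sqrt c + 1)). intros a b Ha' Hb'.
  assert (HM1 := Rmax_l N (sqrt c + 1)). assert (HM2 := Rmax_r N (sqrt c + 1)).
  eexists. split; [apply Riemann_of_is_RInt, is_RInt_mom2_band; auto; lra|].
  specialize (Hb b ltac:(lra)). specialize (Ha a ltac:(lra)).
  replace (al * (mom2_prim s m b - mom2_prim s m a) - be * trunc_mom2 s m (sqrt c)
           - (al * m ^ 2 - be * trunc_mom2 s m (sqrt c)))
    with (al * ((mom2_prim s m b - m ^ 2 / 2) - (mom2_prim s m a + m ^ 2 / 2))) by field.
  rewrite Rabs_mult.
  assert (T : Rabs ((mom2_prim s m b - m ^ 2 / 2) - (mom2_prim s m a + m ^ 2 / 2)) < 2 * e).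
  { eapply Rle_lt_trans; [apply Rabs_triang|]. rewrite Rabs_Ropp. lra. }
  assert (Hpos := Rabs_pos ((mom2_prim s m b - m ^ 2 / 2) - (mom2_prim s m a + m ^ 2 / 2))).
  replace eps with ((Rabs al + 1) * (2 * e)) by (unfold e; field; lra).
  nra.
Qed.

Lemma trunc_mom2_scale (s m t : R) : 0 < s ->
  trunc_mom2 s m (s * t) = s ^ 2 * trunc_mom2 1 (m / s) t.
Proof.
  intros Hs. unfold trunc_mom2, mom2_prim.
  replace ((s * t - m) / s) with ((t - m / s) / 1) by (field; lra).
  replace ((- (s * t) - m) / s) with ((- t - m / s) / 1) by (field; lra).
  field. lra.
Qed.

(** * The standardized truncated second moment as a function of the mean *)

Definition band_prob (t m : R) : R := Phi (t - m) - Phi (- t - m).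

Lemma band_prob_bounds (t m : R) : 0 <= t -> 0 <= band_prob t m <= 1.
Proof.
  intros Ht. unfold band_prob. assert (Phi (- t - m) <= Phi (t - m)) by (apply Phi_le; lra).
  destruct (Phi_bound (t - m)), (Phi_bound (- t - m)). lra.
Qed.

Lemma phi_1_le_band_prob (t x : R) : 1 <= t -> -1 <= x <= 1 -> phi 1 <= band_prob t x.
Proof.
  intros Ht Hx. unfold band_prob.
  assert (A0 : phi 1 <= Phi 1 - Phi 0).
  { rewrite <- RInt_phi.
    replace (phi 1) with (RInt (fun _ => phi 1) 0 1)
      by (rewrite RInt_const; unfold scal; simpl; unfold mult; simpl; R_eq; ring).
    apply RInt_le; [lra | apply ex_RInt_const | apply ex_RInt_phi |].
    intros y Hy. apply phi_le_sqr. nra. }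
  assert (Phi (-1) = - Phi 1) by (rewrite <- Phi_odd; f_equal; ring).
  assert (Phi 0 = 0) by apply Phi_0.
  destruct (Rle_dec 0 x).
  - assert (Phi 0 <= Phi (t - x)) by (apply Phi_le; lra).
    assert (Phi (- t - x) <= Phi (-1)) by (apply Phi_le; lra). lra.
  - assert (Phi 1 <= Phi (t - x)) by (apply Phi_le; lra).
    assert (Phi (- t - x) <= Phi 0) by (apply Phi_le; lra). lra.
Qed.

Lemma is_RInt_npdf_band (t m : R) : is_RInt (npdf m 1) (- t) t (band_prob t m).
Proof.
  unfold band_prob. rewrite <- (Rdiv_1 (t - m)), <- (Rdiv_1 (- t - m)).
  apply (@is_RInt_derive R_CompleteNormedModule (fun x => Phi ((x - m) / 1))).
  - intros x _. apply is_derive_Phi_std. lra.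
  - intros x _. apply (@ex_derive_continuous R_AbsRing R_NormedModule).
    unfold npdf, phi. auto_derive. repeat split; lra.
Qed.

Lemma trunc_mom2_std_bounds (t m : R) : 1 <= t -> - 1 <= trunc_mom2 1 m t <= t ^ 2 - 1.
Proof.
  intros Ht.
  assert (I0 := is_RInt_mom2 1 m (- t) t ltac:(lra)). fold (trunc_mom2 1 m t) in I0.
  assert (I1 : is_RInt (fun x => -1 * npdf m 1 x) (- t) t (-1 * band_prob t m))
    by exact (@is_RInt_scal R_NormedModule _ _ _ _ _ (is_RInt_npdf_band t m)).
  assert (I2 : is_RInt (fun x => (t ^ 2 - 1) * npdf m 1 x) (- t) t ((t ^ 2 - 1) * band_prob t m))
    by exact (@is_RInt_scal R_NormedModule _ _ _ _ _ (is_RInt_npdf_band t m)).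
  assert (HP := band_prob_bounds t m ltac:(lra)).
  assert (Hn : forall x, 0 <= npdf m 1 x)
    by (intros; unfold npdf; rewrite Rdiv_1; apply Rlt_le, phi_pos).
  assert (L1 : -1 * band_prob t m <= trunc_mom2 1 m t).
  { apply (is_RInt_le _ _ (- t) t _ _ ltac:(lra) I1 I0).
    intros x _. unfold mom2. specialize (Hn x). nra. }
  assert (L2 : trunc_mom2 1 m t <= (t ^ 2 - 1) * band_prob t m).
  { apply (is_RInt_le _ _ (- t) t _ _ ltac:(lra) I0 I2).
    intros x Hx. unfold mom2. specialize (Hn x). assert (x ^ 2 <= t ^ 2) by nra. nra. }
  assert (0 <= (t ^ 2 - 1) * (1 - band_prob t m)) by (apply Rmult_le_pos; nra).
  lra.
Qed.

Lemma trunc_mom2_std_centered (t : R) : trunc_mom2 1 0 t = - 2 * t * phi t.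
Proof.
  unfold trunc_mom2, mom2_prim. rewrite !Rdiv_1, !Rminus_0_r, phi_even. ring.
Qed.

Definition trunc_mom2_std_deriv (t m : R) : R :=
  - (1 + t ^ 2) * (phi (t - m) - phi (t + m)) + 2 * m * band_prob t m.

Lemma is_derive_trunc_mom2_std (t m : R) :
  is_derive (fun m => trunc_mom2 1 m t) m (trunc_mom2_std_deriv t m).
Proof.
  unfold trunc_mom2, mom2_prim, trunc_mom2_std_deriv, band_prob. auto_derive.
  - repeat split; eexists; (apply is_derive_phi || apply is_derive_Phi).
  - rewrite !Derive_phi, !Derive_Phi.
    replace ((t + - m) * / 1) with (t - m) by field.
    replace ((- t + - m) * / 1) with (- (t + m)) by field.
    replace (- t - m) with (- (t + m)) by ring. rewrite phi_even.
    R_eq. simpl. field.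
Qed.

Lemma trunc_mom2_std_shift_le (t m : R) : 0 <= t ->
  trunc_mom2 1 m t - trunc_mom2 1 0 t <= m ^ 2.
Proof.
  intros Ht.
  cut (0 ^ 2 - trunc_mom2 1 0 t <= m ^ 2 - trunc_mom2 1 m t); [lra|].
  apply (le_of_derive_sign (fun m => m ^ 2 - trunc_mom2 1 m t)
           (fun x => 2 * x - trunc_mom2_std_deriv t x)).
  - intros x. apply (@is_derive_minus R_AbsRing R_NormedModule); [|apply is_derive_trunc_mom2_std].
    auto_derive; [auto | R_eq; ring].
  - intros x _. unfold trunc_mom2_std_deriv.
    assert (HP := band_prob_bounds t x Ht). assert (Hphi := mul_phi_sub_phi_ge0 t x Ht).
    assert (0 <= x ^ 2 * (1 - band_prob t x)) by (apply Rmult_le_pos; nra).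
    nra.
Qed.

Lemma trunc_mom2_std_shift_ge (t m : R) : 1 <= t ->
  - m ^ 2 <= trunc_mom2 1 m t - trunc_mom2 1 0 t.
Proof.
  intros Ht. destruct (Rle_dec 1 (m ^ 2)) as [Hm|Hm].
  - destruct (trunc_mom2_std_bounds t m Ht). rewrite trunc_mom2_std_centered.
    assert (0 <= t * phi t) by (apply Rmult_le_pos; [lra | apply Rlt_le, phi_pos]). lra.
  - cut (trunc_mom2 1 0 t + 0 ^ 2 <= trunc_mom2 1 m t + m ^ 2); [lra|].
    apply (le_of_derive_sign (fun m => trunc_mom2 1 m t + m ^ 2)
             (fun x => trunc_mom2_std_deriv t x + 2 * x)).
    + intros x. apply (@is_derive_plus R_AbsRing R_NormedModule); [apply is_derive_trunc_mom2_std|].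
      auto_derive; [auto | R_eq; ring].
    + intros x Hx. assert (Hx1 : -1 <= x <= 1).
      { destruct (Rle_dec 0 m);
          [rewrite Rmin_left, Rmax_right in Hx | rewrite Rmin_right, Rmax_left in Hx]; nra. }
      unfold trunc_mom2_std_deriv.
      assert (K := mul_phi_sub_phi_le t x ltac:(lra) Hx1).
      assert (HP := phi_1_le_band_prob t x Ht Hx1).
      nra.
Qed.

Lemma trunc_mom2_centered (s t : R) : 0 < s ->
  trunc_mom2 s 0 (s * t) = - (2 * s ^ 2 * t * phi t).
Proof.
  intros Hs. rewrite trunc_mom2_scale, Rdiv_0_l, trunc_mom2_std_centered by exact Hs. ring.
Qed.

Lemma trunc_mom2_std_shift_abs (t m : R) : 1 <= t ->
  Rabs (trunc_mom2 1 m t - trunc_mom2 1 0 t) <= Rmin (m ^ 2) (t ^ 2).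
Proof.
  intros Ht. apply Rmin_glb; apply Rabs_le.
  - split; [apply trunc_mom2_std_shift_ge | apply trunc_mom2_std_shift_le]; lra.
  - destruct (trunc_mom2_std_bounds t m Ht), (trunc_mom2_std_bounds t 0 Ht). lra.
Qed.

Lemma trunc_mom2_shift_abs (s m t : R) : 0 < s -> 1 <= t ->
  Rabs (trunc_mom2 s m (s * t) - trunc_mom2 s 0 (s * t)) <= Rmin (m ^ 2) (s ^ 2 * t ^ 2).
Proof.
  intros Hs Ht.
  rewrite !trunc_mom2_scale, Rdiv_0_l, <- Rmult_minus_distr_l, Rabs_mult, Rabs_right by nra.
  replace (m ^ 2) with (s ^ 2 * (m / s) ^ 2) by (field; lra).
  rewrite <- Rmult_min_distr_l by nra.
  apply Rmult_le_compat_l; [nra | apply trunc_mom2_std_shift_abs, Ht].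
Qed.

(** * The expectation *)

Lemma ind_max_band (c x y : R) : ind_max c x y = 1 - band_ind c x * band_ind c y.
Proof.
  unfold ind_max, band_ind, Rmax.
  destruct (Rle_dec (x ^ 2) (y ^ 2)), (Rlt_dec c (x ^ 2)), (Rlt_dec c (y ^ 2)); try ring; lra.
Qed.

Lemma expect2_gfun (s tau m th : R) : 0 < s -> 0 < tau ->
  expect2 (gfun s tau) m th s
    (m ^ 2 * th ^ 2 - trunc_mom2 s m (s * sqrt tau) * trunc_mom2 s th (s * sqrt tau)).
Proof.
  intros Hs Ht. set (c := s ^ 2 * tau). assert (Hc : 0 < c) by (apply Rmult_lt_0_compat; nra).
  assert (Hsc : sqrt c = s * sqrt tau)
    by (unfold c; rewrite sqrt_mult, sqrt_pow2 by nra; reflexivity).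
  rewrite <- Hsc. set (T := trunc_mom2 s m (sqrt c)).
  exists (fun y => (y ^ 2 - s ^ 2) * m ^ 2 - (y ^ 2 - s ^ 2) * band_ind c y * T). split.
  - intros y.
    replace (fun x => gfun s tau x y * npdf m s x) with
      (fun x => mom2 s m x * ((y ^ 2 - s ^ 2) - (y ^ 2 - s ^ 2) * band_ind c y * band_ind c x)).
    + apply improper_int_mom2_band; assumption.
    + apply functional_extensionality; intros x.
      unfold gfun, mom2. rewrite ind_max_band. fold c. ring.
  - replace (fun y => ((y ^ 2 - s ^ 2) * m ^ 2 - (y ^ 2 - s ^ 2) * band_ind c y * T) * npdf th s y)
      with (fun y => mom2 s th y * (m ^ 2 - T * band_ind c y)).
    + apply improper_int_mom2_band; assumption.
    + apply functional_extensionality; intros y. unfold mom2. ring.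
Qed.

Theorem lemma3 (mu th s tau : R) (hs : 0 < s) (htau : 1 <= tau) :
  expect2 (gfun s tau) 0 0 s (- 4 * s ^ 4 * tau * (phi (sqrt tau)) ^ 2) /\
  (exists l, expect2 (gfun s tau) mu th s l) /\
  (forall l, expect2 (gfun s tau) mu th s l ->
     Rabs (l - (- 4 * s ^ 4 * tau * (phi (sqrt tau)) ^ 2) - mu ^ 2 * th ^ 2)
     <= Rmin (mu ^ 2) (3 * s ^ 2 * tau) * Rmin (th ^ 2) (3 * s ^ 2 * tau)
        + 2 * s ^ 2 * sqrt tau * phi (sqrt tau) * Rmin (mu ^ 2) (3 * s ^ 2 * tau)
        + 2 * s ^ 2 * sqrt tau * phi (sqrt tau) * Rmin (th ^ 2) (3 * s ^ 2 * tau)).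
Proof.
  assert (Hst : 1 <= sqrt tau) by (rewrite <- sqrt_1; apply sqrt_le_1_alt, htau).
  assert (Htt : sqrt tau ^ 2 = tau) by (apply pow2_sqrt; lra).
  set (a := 2 * s ^ 2 * sqrt tau * phi (sqrt tau)).
  assert (Ha : 0 <= a)
    by (assert (H := phi_pos (sqrt tau)); apply Rmult_le_pos; [apply Rmult_le_pos|]; nra).
  set (T m := trunc_mom2 s m (s * sqrt tau)).
  assert (HT0 : T 0 = - a) by apply trunc_mom2_centered, hs.
  replace (- 4 * s ^ 4 * tau * phi (sqrt tau) ^ 2) with (- T 0 ^ 2)
    by (rewrite HT0; unfold a; set (r := sqrt tau) in *; rewrite <- Htt; ring).
  assert (HD : forall m, Rabs (T m - T 0) <= Rmin (m ^ 2) (3 * s ^ 2 * tau)).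
  { intros m. eapply Rle_trans; [apply trunc_mom2_shift_abs; [exact hs | exact Hst]|].
    apply Rle_min_compat_l. rewrite Htt. nra. }
  assert (HE : forall m m', expect2 (gfun s tau) m m' s (m ^ 2 * m' ^ 2 - T m * T m'))
    by (intros; apply expect2_gfun; lra).
  split; [|split].
  - replace (- T 0 ^ 2) with (0 ^ 2 * 0 ^ 2 - T 0 * T 0) by ring. apply HE.
  - eexists. apply HE.
  - intros l Hl. rewrite (expect2_unique _ _ _ _ _ _ Hl (HE mu th)).
    replace (mu ^ 2 * th ^ 2 - T mu * T th - - T 0 ^ 2 - mu ^ 2 * th ^ 2)
      with (T 0 ^ 2 - T mu * T th) by ring.
    eapply Rle_trans; [apply Rabs_sqr_sub_mul_le|].
    replace (Rabs (T 0)) with a by (rewrite HT0, Rabs_Ropp, Rabs_right; lra).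
    assert (B1 := HD mu). assert (B2 := HD th).
    assert (P1 := Rabs_pos (T mu - T 0)). assert (P2 := Rabs_pos (T th - T 0)).
    apply Rplus_le_compat; [apply Rplus_le_compat|]; apply Rmult_le_compat; lra.
Qed.
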